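(* Let $(X,d)$ be a complete metric space and let $\{T_i\}_{i\in\mathbb{N}}$ be a sequence of continuous maps $T_i:X\to X$ having a compact invariant domain $C\subseteq X$ (i.e. $T_i(x)\in C$ for all $x\in C$ and all $i\in\mathbb{N}$). Suppose $T_i$ converges uniformly on $C$ to a map $T$, where $T$ is a $\phi$-contraction with a comparison function $\phi$. Then for every $x\in C$ the forward trajectory $\Phi_k(x)=T_k\circ T_{k-1}\circ\cdots\circ T_1(x)$ converges to the fixed point $p$ of $T$, i.e. $\lim_{k\to\infty} d(\Phi_k(x),p)=0$.
   Context: A comparison function is a non-decreasing map $\phi:[0,\infty)\to[0,\infty)$ such that $\phi^p(t)\to 0$ as $p\to\infty$ for every $t\ge 0$, where $\phi^p$ denotes the $p$-fold composition of $\phi$. A map $T:X\to X$ is a $\phi$-contraction if $d(T(x),T(y))\le\phi(d(x,y))$ for all $x,y\in X$; such a map on a complete metric space has a unique fixed point. *)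

From Stdlib Require Import Reals Lra List.
Open Scope R_scope.

Section MetricDefs.
Variable M : Metric_Space.
Notation X := (Base M).
Notation d := (dist M).

Definition cauchy_seq (u : nat -> X) : Prop :=
  forall eps, 0 < eps -> exists N, forall m n, (N <= m)%nat -> (N <= n)%nat ->
    d (u m) (u n) < eps.

Definition seq_converges (u : nat -> X) (l : X) : Prop :=
  forall eps, 0 < eps -> exists N, forall n, (N <= n)%nat -> d (u n) l < eps.

Definition complete_space : Prop :=
  forall u : nat -> X, cauchy_seq u -> exists l, seq_converges u l.

Definition open_set (U : X -> Prop) : Prop :=
  forall x, U x -> exists r, 0 < r /\ forall y, d x y < r -> U y.

Definition compact_set (C : X -> Prop) : Prop :=
  forall (I : Type) (U : I -> X -> Prop),
    (forall i, open_set (U i)) ->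
    (forall x, C x -> exists i, U i x) ->
    exists l : list I, forall x, C x -> exists i, In i l /\ U i x.

Definition continuous_map (f : X -> X) : Prop :=
  forall x eps, 0 < eps -> exists delta, 0 < delta /\
    forall y, d x y < delta -> d (f x) (f y) < eps.

Definition invariant_domain (Ts : nat -> X -> X) (C : X -> Prop) : Prop :=
  forall i x, C x -> C (Ts i x).

Definition unif_conv_on (Ts : nat -> X -> X) (T : X -> X) (C : X -> Prop) : Prop :=
  forall eps, 0 < eps -> exists N, forall n x, (N <= n)%nat -> C x ->
    d (Ts n x) (T x) < eps.

Definition phi_contraction (phi : R -> R) (T : X -> X) : Prop :=
  forall x y, d (T x) (T y) <= phi (d x y).

Fixpoint trajectory (Ts : nat -> X -> X) (k : nat) (x : X) : X :=
  match k with
  | O => x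
  | S k' => Ts (S k') (trajectory Ts k' x)
  end.

End MetricDefs.

Definition comparison_function (phi : R -> R) : Prop :=
  (forall t, 0 <= t -> 0 <= phi t) /\
  (forall s t, 0 <= s -> s <= t -> phi s <= phi t) /\
  (forall t, 0 <= t -> Un_cv (fun p => Nat.iter p phi t) 0).

(* Let [g z = d(z, p) - d(T z, p)].  Since [phi t < t] for [t > 0], [g] is
   positive away from [p], and it is 2-Lipschitz because [T] is nonexpansive;
   so on the compact set [C] it is bounded below by some [eta > 0] outside the
   ball of radius [delta] around [p].  Once [T_k] is uniformly [eta/2]-close to
   [T] on [C], each step of the trajectory taken outside that ball decreases
   the distance to [p] by at least [eta/2], while no step increases it by more
   than [delta].  Hence the trajectory enters the ball and afterwards never
   leaves the ball of radius [2 delta]. *)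
From Pilot Require Import Defs.
From Stdlib Require Import Reals Lra Lia List Classical.
Open Scope R_scope.

Lemma le_iter_of_le (phi : R -> R) (t : R) :
  (forall s u, 0 <= s -> s <= u -> phi s <= phi u) ->
  0 <= t -> t <= phi t -> forall n, t <= Nat.iter n phi t.
Proof.
  intros phi_mono t_ge0 t_le n; induction n as [|n IH]; simpl; [lra|].
  assert (phi t <= phi (Nat.iter n phi t)) by (apply phi_mono; lra).
  lra.
Qed.

Section ComparisonFunction.
Variable phi : R -> R.
Hypothesis phi_cmp : comparison_function phi.

Lemma comparison_function_le_image_le0 (t : R) : 0 <= t -> t <= phi t -> t <= 0.
Proof.
  destruct phi_cmp as [_ [phi_mono phi_iter]]; intros t_ge0 t_le.
  apply Rnot_lt_le; intro t_gt0.
  destruct (phi_iter t t_ge0 t t_gt0) as [N HN].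
  specialize (HN N (le_n N)); unfold Rdist in HN.
  pose proof (le_iter_of_le phi t phi_mono t_ge0 t_le N).
  rewrite Rminus_0_r, Rabs_right in HN by lra.
  lra.
Qed.

Lemma comparison_function_lt (t : R) : 0 < t -> phi t < t.
Proof.
  intro t_gt0; apply Rnot_le_lt; intro t_le.
  pose proof (comparison_function_le_image_le0 t (Rlt_le _ _ t_gt0) t_le); lra.
Qed.

Lemma comparison_function_le (t : R) : 0 <= t -> phi t <= t.
Proof.
  destruct phi_cmp as [_ [phi_mono _]]; intro t_ge0.
  destruct (Req_dec t 0) as [->|t_neq0].
  - apply Rnot_lt_le; intro phi0_gt0.
    assert (phi 0 <= phi (phi 0)) by (apply phi_mono; lra).
    pose proof (comparison_function_le_image_le0 (phi 0) (Rlt_le _ _ phi0_gt0)).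
    lra.
  - left; apply comparison_function_lt; lra.
Qed.

End ComparisonFunction.

Lemma list_pos_lower_bound {I : Type} (l : list I) (f : I -> R) :
  exists eta, 0 < eta /\ forall i, In i l -> 0 < f i -> eta <= f i.
Proof.
  induction l as [|a l [eta [eta_gt0 Heta]]].
  - exists 1; split; [lra|]; intros i [].
  - destruct (Rlt_le_dec 0 (f a)) as [fa_gt0|fa_le0].
    + exists (Rmin eta (f a)); split; [now apply Rmin_glb_lt|].
      intros i [<-|Hi] fi_gt0; [apply Rmin_r|].
      eapply Rle_trans; [apply Rmin_l|]; auto.
    + exists eta; split; [exact eta_gt0|].
      intros i [<-|Hi] fi_gt0; [lra|auto].
Qed.

Section MetricSpace.
Variable M : Metric_Space.
Notation X := (Base M).
Notation d := (dist M).

Lemma dist_ge0 (x y : X) : 0 <= d x y.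
Proof. apply Rge_le, dist_pos. Qed.

Lemma open_ball (c : X) (r : R) : Defs.open_set M (fun z => d c z < r).
Proof.
  intros z z_in; exists (r - d c z); split; [lra|].
  intros w w_near; pose proof (dist_tri M c w z); lra.
Qed.

Lemma compact_lipschitz_pos_lower_bound (C U : X -> Prop) (g : X -> R) (K : R) :
  compact_set M C -> Defs.open_set M U -> 0 < K ->
  (forall y z, g y <= g z + K * d y z) ->
  (forall z, C z -> ~ U z -> 0 < g z) ->
  exists eta, 0 < eta /\ forall z, C z -> ~ U z -> eta <= g z.
Proof.
  intros C_cpt U_open K_gt0 g_lip g_pos.
  pose (V := fun (i : option X) =>
              match i with
              | None => U
              | Some y => fun z => d y z < g y / (2 * K)
              end).
  assert (V_open : forall i, Defs.open_set M (V i)).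
  { intros [y|]; [apply open_ball|exact U_open]. }
  assert (V_cover : forall z, C z -> exists i, V i z).
  { intros z z_in; destruct (classic (U z)) as [z_U|z_nU].
    - now exists None.
    - exists (Some z); simpl; rewrite (proj2 (dist_refl M z z) eq_refl).
      pose proof (g_pos z z_in z_nU).
      apply Rdiv_lt_0_compat; lra. }
  destruct (C_cpt _ V V_open V_cover) as [l Hl].
  destruct (list_pos_lower_bound l
              (fun i => match i with None => 0 | Some y => g y / 2 end))
    as [eta [eta_gt0 Heta]].
  exists eta; split; [exact eta_gt0|]; intros z z_in z_nU.
  destruct (Hl z z_in) as [[y|] [y_in z_near]]; [|contradiction].
  simpl in z_near.
  assert (lip_small : K * d y z < g y / 2).
  { apply (Rmult_lt_compat_l K) in z_near; [|exact K_gt0].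
    replace (K * (g y / (2 * K))) with (g y / 2) in z_near by (field; lra).
    exact z_near. }
  assert (0 <= K * d y z) by (apply Rmult_le_pos; [lra|apply dist_ge0]).
  specialize (Heta (Some y) y_in); simpl in Heta.
  pose proof (g_lip y z); pose proof (Heta ltac:(lra)); lra.
Qed.

Section PhiContraction.
Variables (phi : R -> R) (T : X -> X).
Hypotheses (phi_cmp : comparison_function phi) (T_contr : phi_contraction M phi T).

Lemma phi_contraction_nonexpansive (x y : X) : d (T x) (T y) <= d x y.
Proof.
  eapply Rle_trans; [apply T_contr|].
  apply comparison_function_le, dist_ge0; exact phi_cmp.
Qed.

Lemma phi_contraction_dist_fixpoint_lt (p z : X) :
  T p = p -> 0 < d z p -> d (T z) p < d z p.
Proof.
  intros Tp zp_gt0; rewrite <- Tp at 1.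
  eapply Rle_lt_trans; [apply T_contr|].
  now apply comparison_function_lt.
Qed.

Lemma phi_contraction_uniform_decrease (C : X -> Prop) (p : X) (delta : R) :
  compact_set M C -> T p = p -> 0 < delta ->
  exists eta, 0 < eta /\
    forall z, C z -> delta <= d z p -> d (T z) p + eta <= d z p.
Proof.
  intros C_cpt Tp delta_gt0.
  destruct (compact_lipschitz_pos_lower_bound C (fun z => d p z < delta)
              (fun z => d z p - d (T z) p) 2 C_cpt (open_ball p delta))
    as [eta [eta_gt0 Heta]]; [lra| | |].
  - intros y z.
    pose proof (dist_tri M y p z); pose proof (dist_tri M (T z) p (T y)).
    pose proof (phi_contraction_nonexpansive z y).
    rewrite (dist_sym M z y) in *; lra.
  - intros z _ z_far; rewrite dist_sym in z_far.
    pose proof (phi_contraction_dist_fixpoint_lt p z Tp); lra.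
  - exists eta; split; [exact eta_gt0|]; intros z z_in z_far.
    rewrite dist_sym in z_far.
    pose proof (Heta z z_in ltac:(lra)); lra.
Qed.

End PhiContraction.

Lemma trajectory_in_invariant_domain (Ts : nat -> X -> X) (C : X -> Prop) (x : X) :
  invariant_domain M Ts C -> C x -> forall k, C (trajectory M Ts k x).
Proof. intros C_inv x_in k; induction k; simpl; auto. Qed.

Lemma trajectory_dist_descent (Ts : nat -> X -> X) (C : X -> Prop) (T : X -> X)
    (phi : R -> R) (p x : X) (delta : R) :
  compact_set M C -> invariant_domain M Ts C -> unif_conv_on M Ts T C ->
  comparison_function phi -> phi_contraction M phi T -> T p = p -> C x ->
  0 < delta ->
  let a k := d (trajectory M Ts k x) p in
  exists eta N, 0 < eta /\ forall k, (N <= k)%nat ->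
    a (S k) < a k + delta /\ (delta <= a k -> a (S k) <= a k - eta).
Proof.
  intros C_cpt C_inv Ts_cv phi_cmp T_contr Tp x_in delta_gt0 a.
  destruct (phi_contraction_uniform_decrease phi T phi_cmp T_contr C p delta
              C_cpt Tp delta_gt0) as [eta [eta_gt0 T_decr]].
  destruct (Ts_cv (Rmin (eta / 2) delta)) as [N Ts_close];
    [apply Rmin_glb_lt; lra|].
  exists (eta / 2), N; split; [lra|]; intros k k_ge.
  pose proof (Rmin_l (eta / 2) delta); pose proof (Rmin_r (eta / 2) delta).
  pose (y := trajectory M Ts k x).
  assert (y_in : C y) by now apply trajectory_in_invariant_domain.
  pose proof (Ts_close (S k) y ltac:(lia) y_in).
  pose proof (dist_tri M (Ts (S k) y) p (T y)).
  pose proof (phi_contraction_nonexpansive phi T phi_cmp T_contr y p).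
  rewrite Tp in *; unfold a; simpl; fold y.
  split; [lra|]; intro y_far.
  pose proof (T_decr y y_in y_far); lra.
Qed.

End MetricSpace.

Section Descent.
Variables (a : nat -> R) (delta eta : R) (N : nat).
Hypotheses (a_ge0 : forall k, 0 <= a k) (eta_gt0 : 0 < eta).
Hypothesis a_step : forall k, (N <= k)%nat -> a (S k) < a k + delta.
Hypothesis a_descent : forall k, (N <= k)%nat -> delta <= a k -> a (S k) <= a k - eta.

Lemma descent_reaches : exists K, (N <= K)%nat /\ a K < delta.
Proof.
  apply NNPP; intro never_below.
  assert (far : forall k, (N <= k)%nat -> delta <= a k).
  { intros k k_ge; apply Rnot_lt_le; intro; apply never_below; eauto. }
  assert (decay : forall j, a (N + j)%nat <= a N - INR j * eta).
  { induction j as [|j IH]; [rewrite Nat.add_0_r; simpl; lra|].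
    rewrite Nat.add_succ_r, S_INR, Rmult_plus_distr_r, Rmult_1_l.
    pose proof (a_descent (N + j)%nat ltac:(lia) (far (N + j)%nat ltac:(lia))); lra. }
  destruct (INR_archimed eta (a N) eta_gt0) as [j Hj].
  pose proof (decay j); pose proof (a_ge0 (N + j)%nat); lra.
Qed.

Lemma descent_trapped (K : nat) :
  (N <= K)%nat -> a K < 2 * delta -> forall n, (K <= n)%nat -> a n < 2 * delta.
Proof.
  intros K_ge aK n n_ge; induction n_ge as [|n n_ge IH]; [exact aK|].
  pose proof (a_step n ltac:(lia)).
  destruct (Rlt_le_dec (a n) delta) as [an_lt|an_ge]; [lra|].
  pose proof (a_descent n ltac:(lia) an_ge); lra.
Qed.

Lemma descent_eventually_lt : exists K, forall n, (K <= n)%nat -> a n < 2 * delta.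
Proof.
  destruct descent_reaches as [K [K_ge aK]].
  exists K; apply descent_trapped; [exact K_ge|].
  pose proof (a_ge0 K); lra.
Qed.

End Descent.

Theorem proposition3p10 (M : Metric_Space) (Ts : nat -> Base M -> Base M)
  (C : Base M -> Prop) (T : Base M -> Base M) (phi : R -> R) :
  complete_space M ->
  (forall i, continuous_map M (Ts i)) ->
  compact_set M C ->
  invariant_domain M Ts C ->
  unif_conv_on M Ts T C ->
  comparison_function phi ->
  phi_contraction M phi T ->
  forall p : Base M, T p = p ->
  forall x : Base M, C x ->
    Un_cv (fun k => dist M (trajectory M Ts k x) p) 0.
Proof.
  intros _ _ C_cpt C_inv Ts_cv phi_cmp T_contr p Tp x x_in eps eps_gt0.
  destruct (trajectory_dist_descent M Ts C T phi p x (eps / 2) C_cpt C_inv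
              Ts_cv phi_cmp T_contr Tp x_in ltac:(lra))
    as [eta [N [eta_gt0 descent]]].
  destruct (descent_eventually_lt (fun k => dist M (trajectory M Ts k x) p)
              (eps / 2) eta N (fun k => dist_ge0 M _ _) eta_gt0
              (fun k k_ge => proj1 (descent k k_ge))
              (fun k k_ge => proj2 (descent k k_ge))) as [K close].
  exists K; intros n n_ge; unfold Rdist.
  rewrite Rminus_0_r, Rabs_right by apply Rle_ge, dist_ge0.
  pose proof (close n n_ge); lra.
Qed.
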